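(* Let $p$ be a prime number and let $x,y,z\in\mathbb{N}$ with $x\le y\le z$ satisfy $\frac{4}{p}=\frac{1}{x}+\frac{1}{y}+\frac{1}{z}$. Then $\gcd(x,p)=1$.
   Context: $\mathbb{N}$ denotes the positive integers. *)

From mathcomp Require Import all_boot all_order all_algebra.

From mathcomp Require Import all_boot all_order all_algebra.
From mathcomp Require Import ring zify.
Import GRing.Theory Num.Theory.

(* Since x is the smallest denominator, 4/p <= 3/x, so 0 < x <= 3p/4 < p and
   the prime p cannot divide x. *)

Lemma egyptian3_natE {R : numFieldType} {n p x y z : nat} :
  0 < p -> 0 < x -> 0 < y -> 0 < z ->
  ((n%:R / p%:R : R) = 1 / x%:R + 1 / y%:R + 1 / z%:R)%R ->
  n * x * y * z = p * (y * z + x * z + x * y).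
Proof.
move=> p0 x0 y0 z0 eq_frac; apply/eqP; rewrite -(eqr_nat R) !(natrM, natrD); apply/eqP.
have nz k : 0 < k -> (k%:R : R)%R != 0%R by rewrite pnatr_eq0 -lt0n.
transitivity (n%:R / p%:R * (p%:R * x%:R * y%:R * z%:R) : R)%R.
  by field; rewrite nz.
by rewrite eq_frac; field; rewrite ?nz.
Qed.

Lemma egyptian3_min_le {n p x y z : nat} :
  0 < y -> 0 < z -> x <= y -> y <= z ->
  n * x * y * z = p * (y * z + x * z + x * y) -> n * x <= 3 * p.
Proof.
move=> y0 z0 xy yz eq_prod.
have yz0 : 0 < y * z by rewrite muln_gt0 y0.
rewrite -(leq_pmul2r yz0) !mulnA eq_prod -!mulnA mulnCA leq_mul //.
have le_xz : x * z <= y * z by rewrite leq_mul2r xy orbT.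
have le_xy : x * y <= y * z by rewrite mulnC leq_mul2l (leq_trans xy yz) orbT.
lia.
Qed.

Lemma coprime_ltn_prime {p x : nat} : prime p -> 0 < x < p -> coprime x p.
Proof.
move=> pr_p /andP[x0 lt_xp]; rewrite coprime_sym prime_coprime //.
by apply/negP => /(dvdn_leq x0); rewrite leqNgt lt_xp.
Qed.

Theorem lemma2 (p x y z : nat) :
  prime p -> 0 < x -> 0 < y -> 0 < z -> x <= y -> y <= z ->
  ((4%:R / p%:R : rat) = 1 / x%:R + 1 / y%:R + 1 / z%:R)%R ->
  gcdn x p = 1.
Proof.
move=> pr_p x0 y0 z0 xy yz eq_frac.
have p0 := prime_gt0 pr_p.
have le_4x_3p := egyptian3_min_le y0 z0 xy yz (egyptian3_natE p0 x0 y0 z0 eq_frac).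
by apply/eqP/coprime_ltn_prime; rewrite // x0 /=; lia.
Qed.
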